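(* Let $U$ be a nonempty set, let $f:\{T,F\}^n\to\{T,F\}$ be a Boolean function, and let $\pi_1,\dots,\pi_n$ be partitions of $U$. For $u,u'\in U$ and each $i$, set $v_i(u,u')=T$ if $(u,u')\in\operatorname{dit}(\pi_i)$ and $v_i(u,u')=F$ if $(u,u')\in\operatorname{indit}(\pi_i)$. Let $G$ be the simple undirected graph on $U$ in which distinct $u,u'$ are adjacent iff $f(v_1(u,u'),\dots,v_n(u,u'))=F$, and let $f(\pi_1,\dots,\pi_n)$ denote the partition of $U$ into the connected components of $G$. Let $$S=\bigcup_{\substack{(t_1,\dots,t_n)\in\{T,F\}^n\\ f(t_1,\dots,t_n)=F}}\ \bigcap_{i=1}^n A_i^{t_i},\qquad A_i^{T}=\operatorname{dit}(\pi_i),\ A_i^{F}=\operatorname{indit}(\pi_i),$$ (the set obtained from the disjunctive normal form of $\lnot f$ by replacing each unnegated variable $P_i$ by $\operatorname{dit}(\pi_i)$, each negated variable $\lnot P_i$ by $\operatorname{indit}(\pi_i)$, disjunction by union and conjunction by intersection). Then the equivalence relation $\operatorname{indit}(f(\pi_1,\dots,\pi_n))$ equals the reflexive-symmetric-transitive closure $\overline{S}$ of $S$ in $U\times U$; equivalently, $f(\pi_1,\dots,\pi_n)$ is the set of equivalence classes of $\overline{S}$.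
   Context: A partition of $U$ is a set of pairwise disjoint nonempty subsets of $U$ (blocks) whose union is $U$. For a partition $\pi$, $\operatorname{indit}(\pi)=\{(u,u')\in U\times U: u,u' \text{ lie in the same block of }\pi\}$ and $\operatorname{dit}(\pi)=U\times U\setminus\operatorname{indit}(\pi)$. The reflexive-symmetric-transitive closure $\overline{S}$ of $S\subseteq U\times U$ is the intersection of all equivalence relations on $U$ containing $S$. *)

From mathcomp Require Import all_boot.
From mathcomp Require Import boolp.
From Stdlib Require Import Relations.

Set Implicit Arguments.
Unset Strict Implicit.
Unset Printing Implicit Defensive.

Definition is_partition (U : Type) (P : (U -> Prop) -> Prop) : Prop :=
  (forall B, P B -> exists u, B u) /\
  (forall B C, P B -> P C -> B <> C -> forall u, ~ (B u /\ C u)) /\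
  (forall u, exists B, P B /\ B u).

Definition indit (U : Type) (P : (U -> Prop) -> Prop) (u u' : U) : Prop :=
  exists B, P B /\ B u /\ B u'.

Definition dit (U : Type) (P : (U -> Prop) -> Prop) (u u' : U) : Prop :=
  ~ indit P u u'.

(* truth value v_i(u,u') : true = T (distinction), false = F *)
Definition vval (U : Type) (n : nat) (pi : 'I_n -> (U -> Prop) -> Prop)
  (u u' : U) : {ffun 'I_n -> bool} :=
  [ffun i => `[< dit (pi i) u u' >]].

Definition adjG (U : Type) (n : nat) (f : {ffun 'I_n -> bool} -> bool)
  (pi : 'I_n -> (U -> Prop) -> Prop) (u u' : U) : Prop :=
  u <> u' /\ f (vval pi u u') = false.

Definition fpart (U : Type) (n : nat) (f : {ffun 'I_n -> bool} -> bool)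
  (pi : 'I_n -> (U -> Prop) -> Prop) : (U -> Prop) -> Prop :=
  fun B => exists u, B = (fun x => clos_refl_trans U (adjG f pi) u x).

Definition Sset (U : Type) (n : nat) (f : {ffun 'I_n -> bool} -> bool)
  (pi : 'I_n -> (U -> Prop) -> Prop) (u u' : U) : Prop :=
  exists t : {ffun 'I_n -> bool}, f t = false /\
    forall i, (if t i then dit (pi i) u u' else indit (pi i) u u').

Definition is_equivalence (U : Type) (R : U -> U -> Prop) : Prop :=
  (forall x, R x x) /\ (forall x y, R x y -> R y x) /\
  (forall x y z, R x y -> R y z -> R x z).

Definition rst_closure (U : Type) (S : U -> U -> Prop) (u u' : U) : Prop :=
  forall R, is_equivalence R -> (forall x y, S x y -> R x y) -> R u u'.

From mathcomp Require Import all_boot.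
From mathcomp Require Import boolp.
From Stdlib Require Import Relations.

Set Implicit Arguments.
Unset Strict Implicit.
Unset Printing Implicit Defensive.

(* A pair (u, u') lies in S exactly when f evaluates to F at (v_1(u,u'), ..., v_n(u,u')),
   so S is the edge relation of G with the diagonal added. Adding or removing loops does
   not change the generated equivalence relation, and since G is undirected that relation
   is just reachability in G, whose classes are the blocks of f(pi_1, ..., pi_n). *)

Lemma relext (T : Type) (R R' : relation T) :
  (forall x y, R x y <-> R' x y) -> R = R'.
Proof. by move=> RR'; apply: funext => x; apply: funext => y; apply: propext. Qed.

Section Closures.

Variable T : Type.

Lemma is_equivalence_clos_rst (R : relation T) :
  is_equivalence (clos_refl_sym_trans T R).
Proof.
split; first exact: rst_refl.
by split; [exact: rst_sym | exact: rst_trans].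
Qed.

Lemma clos_rst_minimal (R E : relation T) x y :
  is_equivalence E -> (forall a b, R a b -> E a b) ->
  clos_refl_sym_trans T R x y -> E x y.
Proof.
move=> [Er [Es Et]] RE; elim=> {x y} [x y /RE // | x // | x y _ /Es // | x y z _ Exy _ Eyz].
exact: Et Exy Eyz.
Qed.

Lemma rst_closureE (R : relation T) : rst_closure R = clos_refl_sym_trans T R.
Proof.
apply: relext => x y; split=> [|Cxy E Eeq RE]; last exact: clos_rst_minimal Eeq RE Cxy.
by apply; [exact: is_equivalence_clos_rst | exact: rst_step].
Qed.

Lemma clos_rst_irreflexiveE (R : relation T) :
  clos_refl_sym_trans T (fun x y => x <> y /\ R x y) = clos_refl_sym_trans T R.
Proof.
apply: relext => x y; split; apply: clos_rst_minimal (is_equivalence_clos_rst _) _.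
- by move=> a b [_ Rab]; apply: rst_step.
- move=> a b Rab; have [-> | neq_ab] := pselect (a = b); first exact: rst_refl.
  exact: rst_step.
Qed.

Variable R : relation T.
Hypothesis R_sym : forall x y, R x y -> R y x.

Lemma clos_rt_sym x y : clos_refl_trans T R x y -> clos_refl_trans T R y x.
Proof.
elim=> {x y} [x y /R_sym Ryx | x | x y z _ Cyx _ Czy].
- exact: rt_step.
- exact: rt_refl.
- exact: rt_trans Czy Cyx.
Qed.

Lemma is_equivalence_clos_rt : is_equivalence (clos_refl_trans T R).
Proof.
split; first exact: rt_refl.
by split; [exact: clos_rt_sym | exact: rt_trans].
Qed.

Lemma clos_rt_rstE : clos_refl_trans T R = clos_refl_sym_trans T R.
Proof.
apply: relext => x y; split; first exact: clos_rt_clos_rst.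
by apply: clos_rst_minimal is_equivalence_clos_rt _; apply: rt_step.
Qed.

End Closures.

Lemma indit_classes (T : Type) (E : relation T) x y :
  is_equivalence E -> indit (fun B => exists w, B = E w) x y <-> E x y.
Proof.
move=> [Er [Es Et]]; split.
- by case=> _ [[w ->] [Ewx Ewy]]; apply: Et (Es _ _ Ewx) Ewy.
- by move=> Exy; exists (E x); split; [exists x | split].
Qed.

Lemma indit_sym (U : Type) (P : (U -> Prop) -> Prop) u u' :
  indit P u u' -> indit P u' u.
Proof. by case=> B [PB [Bu Bu']]; exists B. Qed.

Section BooleanCombination.

Variables (U : Type) (n : nat) (f : {ffun 'I_n -> bool} -> bool).
Variable pi : 'I_n -> (U -> Prop) -> Prop.

Lemma vval_sym u u' : vval pi u u' = vval pi u' u.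
Proof.
apply/ffunP => i; rewrite !ffunE.
by apply/asboolP/asboolP => dit_uu' indit_u'u; apply/dit_uu'/indit_sym.
Qed.

Lemma adjG_sym u u' : adjG f pi u u' -> adjG f pi u' u.
Proof. by case=> neq_uu' fF; split; [move/esym | rewrite vval_sym]. Qed.

Lemma SsetE u u' : Sset f pi u u' <-> f (vval pi u u') = false.
Proof.
split=> [[t [ft ht]] | fF]; last first.
  exists (vval pi u u'); split=> // i; rewrite ffunE.
  by case: asboolP => // /contrapT.
suff -> : vval pi u u' = t by [].
apply/ffunP => i; rewrite ffunE; have := ht i.
by case: (t i) => [|indit_uu']; [move/asboolP | apply/asboolP].
Qed.

Lemma adjGE : adjG f pi = fun u u' => u <> u' /\ Sset f pi u u'.
Proof. by apply: relext => u u'; rewrite /adjG SsetE. Qed.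

End BooleanCombination.

Theorem mainTheorem5 (U : Type) (n : nat) (f : {ffun 'I_n -> bool} -> bool)
  (pi : 'I_n -> (U -> Prop) -> Prop) :
  inhabited U ->
  (forall i, is_partition (pi i)) ->
  forall u u' : U, indit (fpart f pi) u u' <-> rst_closure (Sset f pi) u u'.
Proof.
move=> _ _ u u'.
have adj_sym := @adjG_sym U n f pi.
rewrite rst_closureE -clos_rst_irreflexiveE -adjGE -(clos_rt_rstE adj_sym).
apply: indit_classes; exact: is_equivalence_clos_rt.
Qed.
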